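(* Suppose that for every $\theta\in\Theta$, $u_\theta:\mathbb R^{d_x}\to\mathbb R$ is concave and differentiable with $\|\nabla u_\theta(x)\|\le B_u$ for all $x$ and $\nabla u_\theta$ $L_u$-Lipschitz, and that $\beta_{\max}L_u<1$. Then for all $\beta,\beta'\in[\beta_{\min},\beta_{\max}]$ and $\theta\in\Theta$, $$\mathcal W(\mathcal D_\beta(\theta),\mathcal D_{\beta'}(\theta))\le\frac{B_u}{1-\beta_{\max}L_u}|\beta-\beta'|,$$ i.e. the atlas is $\epsilon_W$-smooth in Wasserstein distance with $\epsilon_W\le B_u/(1-\beta_{\max}L_u)$.
   Context: Strategic regression: $0<\beta_{\min}\le\beta_{\max}$. For $\beta\in[\beta_{\min},\beta_{\max}]$, $\theta\in\Theta$, and $x_0\in\mathbb R^{d_x}$, the best response is $g_\beta(x_0,\theta)=\arg\max_{x\in\mathbb R^{d_x}}\big(u_\theta(x)-\frac{1}{2\beta}\|x-x_0\|^2\big)$. Given a base distribution $\mathcal D_0$ of feature–label pairs $(x_0,y)$, the atlas is defined by: $(x,y)\sim\mathcal D_\beta(\theta)$ iff $(x_0,y)\sim\mathcal D_0$ and $x=g_\beta(x_0,\theta)$. $\mathcal W$ denotes the Wasserstein-1 distance (Euclidean norm on $(x,y)$). *)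

From HB Require Import structures.
From mathcomp Require Import all_boot all_order all_algebra.
From mathcomp Require Import all_classical all_reals all_analysis.
Set Implicit Arguments. Unset Strict Implicit. Unset Printing Implicit Defensive.
Import Order.TTheory GRing.Theory Num.Theory.
Import numFieldNormedType.Exports.
Local Open Scope classical_set_scope.
Local Open Scope ring_scope.

Section defs.
Variable R : realType.

Definition enorm n (v : 'rV[R]_n) : R := Num.sqrt (\sum_i v ord0 i ^+ 2).

Definition grad n (f : 'rV[R]_n -> R) (x : 'rV[R]_n) : 'rV[R]_n :=
  \row_i ('D_(delta_mx ord0 i) f x).

Definition concave n (f : 'rV[R]_n -> R) : Prop :=
  forall (x y : 'rV[R]_n) (t : R), 0 <= t <= 1 ->
    t * f x + (1 - t) * f y <= f (t *: x + (1 - t) *: y).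

Definition best_response n (u : 'rV[R]_n -> R) (beta : R) (x0 : 'rV[R]_n) : 'rV[R]_n :=
  xget 0 [set x | forall z : 'rV[R]_n,
     u z - enorm (z - x0) ^+ 2 / (2 * beta) <= u x - enorm (x - x0) ^+ 2 / (2 * beta)].

Definition data_space n := ('rV[R]_n * R)%type.

Definition Zb n := g_sigma_algebraType (@open (data_space n)).

Definition zdist n (z z' : data_space n) : R :=
  Num.sqrt (\sum_i (z.1 ord0 i - z'.1 ord0 i) ^+ 2 + (z.2 - z'.2) ^+ 2).

Definition coupling n (mu nu : set (Zb n) -> \bar R)
  (pi : probability (Zb n * Zb n)%type R) : Prop :=
  forall A : set (Zb n), measurable A ->
    pi (fst @^-1` A) = mu A /\ pi (snd @^-1` A) = nu A.

Definition W1 n (mu nu : set (Zb n) -> \bar R) : \bar R :=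
  ereal_inf [set (\int[pi]_p (zdist p.1 p.2)%:E)%E
             | pi in [set pi | coupling mu nu pi]].

Definition atlas n (D0 : probability (Zb n) R) (u : 'rV[R]_n -> R) (beta : R)
  : set (Zb n) -> \bar R :=
  pushforward D0 (fun z : Zb n => ((best_response u beta z.1, z.2) : Zb n)).
End defs.

(* For concave u the agent's objective u x - |x - x0|^2 / (2 beta) is
   (1/beta)-strongly concave, so a solution of the first-order condition
   x = x0 + beta grad u(x) is its unique maximiser; when beta L_u < 1 that
   equation is a contraction, hence solvable.  Subtracting the conditions for
   beta and beta' gives |x - x'| <= |beta - beta'| B_u + beta_max L_u |x - x'|.
   Pushing D_0 forward by the pair of atlas maps couples D_beta with D_beta',
   and along this coupling the transport distance is exactly |x - x'|; the
   coupling is measurable because best responses are Lipschitz in x0. *)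

From HB Require Import structures.
From mathcomp Require Import all_boot all_order all_algebra.
From mathcomp Require Import all_classical all_reals all_analysis.
From mathcomp Require Import measurable_realfun.
From mathcomp Require Import ring lra.
Import Order.TTheory GRing.Theory Num.Theory.
Import numFieldNormedType.Exports.
Set Implicit Arguments. Unset Strict Implicit. Unset Printing Implicit Defensive.
Local Open Scope classical_set_scope.
Local Open Scope ring_scope.

Section euclidean.
Variables (R : realType) (n : nat).
Implicit Types (a b c : 'rV[R]_n).

Definition dot a b : R := \sum_i a ord0 i * b ord0 i.

Lemma dotC a b : dot a b = dot b a.
Proof. by apply: eq_bigr => i _; rewrite mulrC. Qed.

Lemma dotDl a b c : dot (a + b) c = dot a c + dot b c.
Proof. by rewrite /dot -big_split; apply: eq_bigr => i _; rewrite mxE mulrDl. Qed.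

Lemma dotNl a b : dot (- a) b = - dot a b.
Proof. by rewrite /dot -sumrN; apply: eq_bigr => i _; rewrite mxE mulNr. Qed.

Lemma dotBl a b c : dot (a - b) c = dot a c - dot b c.
Proof. by rewrite dotDl dotNl. Qed.

Lemma dotZl k a b : dot (k *: a) b = k * dot a b.
Proof. by rewrite /dot mulr_sumr; apply: eq_bigr => i _; rewrite mxE mulrA. Qed.

Lemma dotDr a b c : dot a (b + c) = dot a b + dot a c.
Proof. by rewrite dotC dotDl !(dotC a). Qed.

Lemma dotBr a b c : dot a (b - c) = dot a b - dot a c.
Proof. by rewrite dotC dotBl !(dotC a). Qed.

Lemma dotZr k a b : dot a (k *: b) = k * dot a b.
Proof. by rewrite dotC dotZl dotC. Qed.

Lemma dot_ge0 a : 0 <= dot a a.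
Proof. by apply: sumr_ge0 => i _; rewrite -expr2 sqr_ge0. Qed.

Lemma dot_eq0 a : dot a a = 0 -> a = 0.
Proof.
move=> /eqP; rewrite psumr_eq0 => [/allP a0|i _]; last by rewrite -expr2 sqr_ge0.
apply/rowP => i; have /implyP := a0 i (mem_index_enum i).
by rewrite mulf_eq0 orbb mxE => /(_ isT) /eqP.
Qed.

Lemma enormE a : enorm a = Num.sqrt (dot a a).
Proof. by congr Num.sqrt; apply: eq_bigr => i _; rewrite expr2. Qed.

Lemma enorm_ge0 a : 0 <= enorm a.
Proof. exact: sqrtr_ge0. Qed.

Lemma sqr_enorm a : enorm a ^+ 2 = dot a a.
Proof. by rewrite enormE sqr_sqrtr // dot_ge0. Qed.

Lemma enorm0_eq0 a : enorm a = 0 -> a = 0.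
Proof. by move=> a0; apply: dot_eq0; rewrite -sqr_enorm a0 expr0n. Qed.

Lemma enormZ k a : enorm (k *: a) = `|k| * enorm a.
Proof.
by rewrite !enormE dotZl dotZr mulrA -expr2 sqrtrM ?sqr_ge0 // sqrtr_sqr.
Qed.

Lemma dot_CauchySchwarz a b : dot a b <= enorm a * enorm b.
Proof.
have [a0|] := eqVneq (dot a a) 0.
  by rewrite (dot_eq0 a0) /dot big1 ?mulr_ge0 ?enorm_ge0 // => i _; rewrite mxE mul0r.
rewrite neq_lt ltNge dot_ge0 /= => a_gt0.
have := dot_ge0 (dot a a *: b - dot a b *: a).
rewrite !(dotBl, dotBr, dotZl, dotZr) (dotC b a) => h.
have ab2 : dot a b ^+ 2 <= (enorm a * enorm b) ^+ 2.
  by rewrite exprMn !sqr_enorm; nra.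
by have := mulr_ge0 (enorm_ge0 a) (enorm_ge0 b); nra.
Qed.

Lemma sqr_enormD a b : enorm (a + b) ^+ 2 = enorm a ^+ 2 + 2 * dot a b + enorm b ^+ 2.
Proof. by rewrite !sqr_enorm dotDl !dotDr (dotC b a); ring. Qed.

Lemma ler_enormD a b : enorm (a + b) <= enorm a + enorm b.
Proof.
have : enorm (a + b) ^+ 2 <= (enorm a + enorm b) ^+ 2.
  by rewrite sqr_enormD sqrrD; have := dot_CauchySchwarz a b; lra.
by move=> h; rewrite -ler_sqr ?nnegrE ?addr_ge0 ?enorm_ge0.
Qed.

Lemma coord_le_enorm a i : `|a ord0 i| <= enorm a.
Proof.
rewrite -sqrtr_sqr ler_sqrt; last by apply: sumr_ge0 => j _; apply: sqr_ge0.
by rewrite (bigD1 i) //= lerDl; apply: sumr_ge0 => j _; apply: sqr_ge0.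
Qed.

Lemma mx_norm_le_enorm a : `|a| <= enorm a.
Proof.
rewrite [leLHS]/Num.norm /= mx_normrE; apply: bigmax_le; first exact: enorm_ge0.
by move=> [i j] _ /=; rewrite (ord1 i); apply: coord_le_enorm.
Qed.

Lemma enorm_le_mx_norm a : enorm a <= n.+1%:R * `|a|.
Proof.
have coord_le_mx i : `|a ord0 i| <= `|a|.
  rewrite [leRHS]/Num.norm /= mx_normrE.
  exact: (le_bigmax _ (fun ij : 'I_1 * 'I_n => `|a ij.1 ij.2|) (ord0, i)).
have : enorm a ^+ 2 <= (n.+1%:R * `|a|) ^+ 2.
  apply: (@le_trans _ _ (\sum_(i < n) `|a| ^+ 2)).
    rewrite sqr_enorm; apply: ler_sum => i _.
    by rewrite -expr2 -real_normK ?num_real // lerXn2r ?nnegrE.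
  rewrite sumr_const card_ord -[_ *+ n]mulr_natl exprMn.
  apply: ler_wpM2r; first exact: sqr_ge0.
  by rewrite -natrX ler_nat (leq_trans (leqnSn n)) // leq_pmull.
by move=> h; rewrite -ler_sqr ?nnegrE ?mulr_ge0 ?enorm_ge0.
Qed.

End euclidean.

Lemma ler_contraction_bound (R : realFieldType) (e a q : R) :
  q < 1 -> e <= a + q * e -> e <= a / (1 - q).
Proof. by move=> q1 he; rewrite ler_pdivlMr ?subr_gt0 //; nra. Qed.

Lemma mulr_lt1_le (R : realFieldType) (b c l : R) :
  0 < b -> b <= c -> c * l < 1 -> b * l < 1.
Proof. by move=> b0 bc cl1; have [l0|l0] := leP 0 l; nra. Qed.

Section gradient.
Variables (R : realType) (n : nat).
Implicit Types (f : 'rV[R]_n -> R) (x z v : 'rV[R]_n).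

Lemma derive_grad f x v : differentiable f x -> 'D_v f x = dot (grad f x) v.
Proof.
move=> df; rewrite deriveE // {1}(row_sum_delta v) linear_sum /dot.
by apply: eq_bigr => j _; rewrite linearZ /= mxE -deriveE // mulrC.
Qed.

Lemma concave_le_tangent f x z : concave f -> differentiable f x ->
  f z <= f x + dot (grad f x) (z - x).
Proof.
move=> cf df; rewrite -lerBlDl -derive_grad //.
have dfx : derivable f x (z - x) by apply: diff_derivable.
have := cvg_dnbhs_at_right dfx; rewrite -/(derive f x (z - x)) => slope_cvg.
apply: (cvgr_to_ge slope_cvg); near=> h.
have h0 : 0 < h by near: h; exact: nbhs_right_gt.
have /(cf z x) chord : 0 <= h <= 1 by rewrite ltW //=; near: h; exact: nbhs_right_le.
rewrite /= /shift /= ler_pdivlMl //.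
have -> : h *: (z - x) + x = h *: z + (1 - h) *: x.
  by rewrite scalerBr scalerBl scale1r [x - _]addrC addrA.
lra.
Unshelve. all: end_near.
Qed.

End gradient.

Section best_response.
Variables (R : realType) (n : nat) (u : 'rV[R]_n -> R) (beta : R).
Hypotheses (u_concave : concave u) (beta_gt0 : 0 < beta).
Implicit Types (x y z : 'rV[R]_n).

Definition agent_utility x0 x := u x - enorm (x - x0) ^+ 2 / (2 * beta).

Lemma agent_utility_gap x0 x z : differentiable u x -> x = x0 + beta *: grad u x ->
  agent_utility x0 z <= agent_utility x0 x - enorm (z - x) ^+ 2 / (2 * beta).
Proof.
move=> du hx; have tangent := concave_le_tangent z u_concave du.
have xx0 : x - x0 = beta *: grad u x by rewrite {1}hx addrC addKr.
have zx0 : z - x0 = (z - x) + beta *: grad u x by rewrite -xx0 addrA subrK.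
rewrite /agent_utility zx0 xx0 sqr_enormD dotZr (dotC (z - x)).
rewrite !(mulrDl _ _ (2 * beta)^-1).
have -> : 2 * (beta * dot (grad u x) (z - x)) / (2 * beta) = dot (grad u x) (z - x).
  by field; rewrite gt_eqF.
lra.
Qed.

Lemma best_response_fixed_point x0 x : differentiable u x ->
  x = x0 + beta *: grad u x -> best_response u beta x0 = x.
Proof.
move=> du hx; have gap := agent_utility_gap _ du hx.
have gap_ge0 z : 0 <= enorm (z - x) ^+ 2 / (2 * beta).
  by rewrite divr_ge0 ?sqr_ge0 // mulr_ge0 // ltW.
apply: xget_unique => [z|y /= /(_ x) y_max].
  by have := gap z; have := gap_ge0 z; rewrite /agent_utility; lra.
have : enorm (y - x) ^+ 2 / (2 * beta) <= 0 by have := gap y; rewrite /agent_utility; lra.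
rewrite pmulr_lle0 ?invr_gt0 ?mulr_gt0 // le_eqVlt ltNge sqr_ge0 orbF sqrf_eq0.
by move=> /eqP/enorm0_eq0/eqP; rewrite subr_eq0 => /eqP.
Qed.

End best_response.

Section contraction.
Variables (R : realType) (n : nat).

(* Banach's fixed point theorem needs a [completeNormedModType], which
   ['rV[R]_n] is not canonically. *)
Definition complete_row := 'rV[R]_n.
HB.instance Definition _ := NormedModule.copy complete_row 'rV[R]_n.
HB.instance Definition _ := Complete.copy complete_row 'rV[R]_n.

Variables (T : 'rV[R]_n -> 'rV[R]_n) (q : R).
Hypothesis T_lip : forall x y, enorm (T x - T y) <= q * enorm (x - y).

Lemma iter_lipschitz : 0 <= q ->
  forall k x y, enorm (iter k T x - iter k T y) <= q ^+ k * enorm (x - y).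
Proof.
move=> q0; elim=> [|k ih] x y /=; first by rewrite expr0 mul1r.
by apply: le_trans (T_lip _ _) _; rewrite exprS -mulrA ler_wpM2l.
Qed.

Lemma enorm_contraction_fixed_point : 0 <= q -> q < 1 -> exists x, x = T x.
Proof.
move=> q0 q1.
(* [T] contracts the Euclidean norm, while the library's norm on rows is the
   sup norm; a high enough iterate of [T] contracts the latter. *)
have [m qmK] : exists m, q ^+ m * n.+1%:R < 1.
  have /cvgrPdist_lt /(_ n.+1%:R^-1) : q ^+ m @[m --> \oo] --> 0.
    by apply: cvg_expr; rewrite ger0_norm.
  rewrite invr_gt0 ltr0n => /(_ isT) -[N _ /(_ N (leqnn N))].
  rewrite /= sub0r normrN ger0_norm ?exprn_ge0 // => qN.
  by exists N; rewrite -ltr_pdivlMr ?ltr0n // div1r.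
have Tm_ctr : is_contraction [fun of totalfun (iter m T : complete_row -> complete_row)].
  have qmK0 : 0 <= q ^+ m * n.+1%:R by rewrite mulr_ge0 ?exprn_ge0.
  exists (NngNum qmK0); split => //= -[x y] _ /=.
  apply: le_trans (mx_norm_le_enorm _) _; apply: le_trans (iter_lipschitz q0 m x y) _.
  by rewrite -mulrA ler_wpM2l ?exprn_ge0 // enorm_le_mx_norm.
have [p _ pE] := banach_fixed_point Tm_ctr (@closedT _) (ex_intro _ 0 I).
have {}pE : iter m T p = p by rewrite {2}pE.
have TpE : iter m T (T p) = T p by rewrite -iterSr iterS pE.
have qm1 : q ^+ m < 1 by apply: le_lt_trans qmK; rewrite ler_peMr ?exprn_ge0 ?ler1n.
have : enorm (p - T p) <= q ^+ m * enorm (p - T p).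
  by rewrite -{1}pE -{1}TpE iter_lipschitz.
have := enorm_ge0 (p - T p) => ge0 le.
have /enorm0_eq0/eqP : enorm (p - T p) = 0 by nra.
by rewrite subr_eq0 => /eqP; exists p.
Qed.

End contraction.

Section best_response_stability.
Variables (R : realType) (n : nat) (u : 'rV[R]_n -> R) (Lu : R).
Hypotheses (u_concave : concave u) (u_diff : forall x, differentiable u x).
Implicit Types (x y : 'rV[R]_n).
Hypothesis grad_lip : forall x y, enorm (grad u x - grad u y) <= Lu * enorm (x - y).

Lemma best_responseE beta x0 : 0 < beta -> beta * Lu < 1 ->
  best_response u beta x0 = x0 + beta *: grad u (best_response u beta x0).
Proof.
move=> beta_gt0 beta_Lu.
pose q := Num.max (beta * Lu) 0.
have [p pE] : exists p, p = x0 + beta *: grad u p.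
  apply: (@enorm_contraction_fixed_point _ _ _ q); rewrite ?le_max ?lexx ?orbT //.
    move=> x y; rewrite opprD addrACA subrr add0r -scalerBr enormZ gtr0_norm //.
    apply: le_trans (ler_wpM2l (ltW beta_gt0) (grad_lip x y)) _.
    by rewrite mulrA ler_wpM2r ?enorm_ge0 // le_max lexx.
  by rewrite gt_max beta_Lu ltr01.
by rewrite (best_response_fixed_point u_concave beta_gt0 (u_diff p) pE).
Qed.

Lemma best_response_lipschitz beta x0 x1 : 0 < beta -> beta * Lu < 1 ->
  enorm (best_response u beta x0 - best_response u beta x1)
    <= enorm (x0 - x1) / (1 - beta * Lu).
Proof.
move=> beta_gt0 beta_Lu; apply: ler_contraction_bound => //.
set x := best_response u beta x0; set x' := best_response u beta x1.
have xE : x = x0 + beta *: grad u x by exact: best_responseE.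
have x'E : x' = x1 + beta *: grad u x' by exact: best_responseE.
rewrite {1}xE {1}x'E opprD addrACA -scalerBr; apply: le_trans (ler_enormD _ _) _.
rewrite lerD2l enormZ gtr0_norm // -mulrA.
by apply: ler_wpM2l; [exact: ltW | exact: grad_lip].
Qed.

Lemma continuous_best_response beta : 0 < beta -> beta * Lu < 1 ->
  continuous (best_response u beta).
Proof.
move=> beta_gt0 beta_Lu x.
apply/(@cvgrPdist_lt _ _ _ (nbhs x) (nbhs_filter x)) => e e_gt0.
have c_gt0 : 0 < 1 - beta * Lu by rewrite subr_gt0.
have d_gt0 : 0 < e * (1 - beta * Lu) / n.+1%:R by rewrite divr_gt0 ?mulr_gt0.
have /cvgrPdist_lt /(_ _ d_gt0) : (fun y => y) @ x --> x := cvg_id.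
apply: filterS => y xy_small; apply: le_lt_trans (mx_norm_le_enorm _) _.
apply: le_lt_trans (best_response_lipschitz _ _ beta_gt0 beta_Lu) _.
rewrite ltr_pdivrMr //; apply: le_lt_trans (enorm_le_mx_norm _) _.
by rewrite mulrC -ltr_pdivlMr ?ltr0n.
Qed.

Variables (Bu bmax : R).
Hypotheses (grad_bounded : forall x, enorm (grad u x) <= Bu) (bmax_Lu : bmax * Lu < 1).

Lemma best_response_lipschitz_beta beta beta' x0 :
  0 < beta -> beta <= bmax -> 0 < beta' -> beta' <= bmax ->
  enorm (best_response u beta x0 - best_response u beta' x0)
    <= Bu / (1 - bmax * Lu) * `|beta - beta'|.
Proof.
move=> beta_gt0 beta_le beta'_gt0 beta'_le; rewrite mulrAC.
apply: ler_contraction_bound => //.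
set x := best_response u beta x0; set x' := best_response u beta' x0.
have split_diff : x - x' = (beta - beta') *: grad u x + beta' *: (grad u x - grad u x').
  have xE : x = x0 + beta *: grad u x.
    by apply: best_responseE => //; exact: mulr_lt1_le bmax_Lu.
  have x'E : x' = x0 + beta' *: grad u x'.
    by apply: best_responseE => //; exact: mulr_lt1_le bmax_Lu.
  by rewrite {1}xE {1}x'E scalerBl scalerBr opprD addrACA subrr add0r addrA subrK.
rewrite {1}split_diff; apply: le_trans (ler_enormD _ _) _.
rewrite !enormZ (gtr0_norm beta'_gt0).
apply: lerD; first by rewrite mulrC; apply: ler_wpM2r.
apply: le_trans (ler_wpM2l (ltW beta'_gt0) (grad_lip x x')) _.
by rewrite -mulrA; apply: ler_wpM2r => //; exact: le_trans (enorm_ge0 _) (grad_lip x x').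
Qed.

End best_response_stability.

Section data_space.
Variables (R : realType) (n : nat).
Local Notation D := (data_space R n).
Local Notation Z := (Zb R n).

Lemma continuous_measurable_Zb (f : D -> D) : continuous f ->
  measurable_fun setT (f : Z -> Z).
Proof.
move=> cf; apply: (@measurability _ _ Z Z setT f (@open D)) => //.
move=> _ [B oB <-]; apply: sub_sigma_algebra; rewrite setTI.
exact: (continuousP f).1.
Qed.

Lemma continuous_measurable_Zb_real (f : D -> R) : continuous f ->
  measurable_fun setT (f : Z -> R).
Proof.
move=> cf; apply: (measurability _ (RGenOpens.measurableE R)).
move=> _ [_ [a [b ->]] <-]; apply: sub_sigma_algebra; rewrite setTI.
by apply: (continuousP f).1; [exact: cf | exact: interval_open].
Qed.

Lemma continuous_map_features (g : 'rV[R]_n -> 'rV[R]_n) : continuous g ->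
  continuous (fun z : D => (g z.1, z.2)).
Proof.
move=> cg z.
apply: (@cvg_pair _ _ _ _ (nbhs (g z.1)) (nbhs z.2) _ _ _ (fun z => g z.1) snd).
  by apply: (@continuous_comp _ _ _ fst g z); [exact: cvg_fst | exact: cg].
exact: cvg_snd.
Qed.

Lemma measurable_zdist :
  measurable_fun setT (fun p : (Z * Z)%type => (zdist p.1 p.2)%:E).
Proof.
have coord i : measurable_fun setT (fun z : Z => z.1 ord0 i).
  apply: (@continuous_measurable_Zb_real (fun z : D => z.1 ord0 i)) => z.
  apply: (@continuous_comp _ _ _ fst (fun a : 'rV[R]_n => a ord0 i) z).
    exact: cvg_fst.
  exact: coord_continuous.
have label : measurable_fun setT (fun z : Z => z.2).
  by apply: (@continuous_measurable_Zb_real snd) => z; exact: cvg_snd.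
apply/measurable_EFinP.
apply: (measurableT_comp (continuous_measurable_fun (@sqrt_continuous R))).
apply: measurable_funD; first apply: measurable_sum => i.
  apply/measurable_funX/measurable_funB.
    exact: (measurableT_comp (coord i) (@measurable_fst _ _ Z Z)).
  exact: (measurableT_comp (coord i) (@measurable_snd _ _ Z Z)).
apply/measurable_funX/measurable_funB.
  exact: (measurableT_comp label (@measurable_fst _ _ Z Z)).
exact: (measurableT_comp label (@measurable_snd _ _ Z Z)).
Qed.

Lemma W1_pushforward_le (D0 : probability Z R) (F G : Z -> Z) (C : R) :
  measurable_fun setT F -> measurable_fun setT G ->
  (forall z, zdist (F z) (G z) <= C) ->
  (W1 (pushforward D0 F) (pushforward D0 G) <= C%:E)%E.
Proof.
move=> mF mG FG_le; have mFG : measurable_fun setT (fun z => (F z, G z) : (Z * Z)%type).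
  exact: measurable_fun_pair.
pose pi := distribution D0 (mfun_Sub (mem_set mFG)).
apply: (@le_trans _ _ (\int[pi]_p (zdist p.1 p.2)%:E))%E.
  by apply: ereal_inf_lbound; exists pi.
rewrite ge0_integral_distribution //; last 2 first.
- exact: measurable_zdist.
- by move=> p; rewrite lee_fin sqrtr_ge0.
apply: (@le_trans _ _ (\int[D0]_z C%:E)%E).
  apply: ge0_le_integral => //.
  - by move=> z _; rewrite lee_fin sqrtr_ge0.
  - exact: measurableT_comp measurable_zdist mFG.
  - by move=> z _; rewrite lee_fin FG_le.
by rewrite integral_cst // [X in (_ * X <= _)%E]probability_setT mule1.
Qed.

Lemma zdist_map_features (g g' : 'rV[R]_n -> 'rV[R]_n) (z : D) :
  zdist (g z.1, z.2) (g' z.1, z.2) = enorm (g z.1 - g' z.1).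
Proof.
rewrite /zdist /= subrr expr0n addr0; congr Num.sqrt.
by apply: eq_bigr => i _; rewrite !mxE.
Qed.

End data_space.

Unset Implicit Arguments.
Theorem claim1 (R : realType) (dx : nat) (Theta : Type)
  (u : Theta -> 'rV[R]_dx -> R) (Bu Lu beta_min beta_max : R)
  (D0 : probability (Zb R dx) R)
  (hbmin : 0 < beta_min) (hbminmax : beta_min <= beta_max)
  (hconc : forall th, concave (u th))
  (hdiff : forall th x, differentiable (u th) x)
  (hB : forall th x, enorm (grad (u th) x) <= Bu)
  (hL : forall th x y, enorm (grad (u th) x - grad (u th) y) <= Lu * enorm (x - y))
  (hbL : beta_max * Lu < 1) :
  forall (beta beta' : R) (th : Theta),
    beta_min <= beta <= beta_max -> beta_min <= beta' <= beta_max ->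
    (W1 (atlas D0 (u th) beta) (atlas D0 (u th) beta')
      <= (Bu / (1 - beta_max * Lu) * `|beta - beta'|)%:E)%E.
Proof.
move=> beta beta' th /andP[/(lt_le_trans hbmin) beta_gt0 beta_le]
  /andP[/(lt_le_trans hbmin) beta'_gt0 beta'_le].
have measurable_atlas_map (b : R) : 0 < b -> b <= beta_max ->
    measurable_fun setT (fun z : Zb R dx => ((best_response (u th) b z.1, z.2) : Zb R dx)).
  move=> b_gt0 b_le; apply: continuous_measurable_Zb.
  apply: (@continuous_map_features _ _ (best_response (u th) b)).
  exact: (continuous_best_response (hconc th) (hdiff th) (hL th) b_gt0
    (mulr_lt1_le b_gt0 b_le hbL)).
apply: W1_pushforward_le; [exact: measurable_atlas_map | exact: measurable_atlas_map |].
move=> z; rewrite zdist_map_features.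
exact: (best_response_lipschitz_beta (hconc th) (hdiff th) (hL th) (hB th) hbL _
  beta_gt0 beta_le beta'_gt0 beta'_le).
Qed.
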